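(* In the standing setup below, every $\phi\in\mathrm{Dr}_1(\mathbf{A}_{\mathcal H},L)$ has the form $\phi_{\overline X}=\Delta\tau^2+g\tau+\gamma(\overline X)$ and $\phi_{\overline Y}=\beta\tau_L$, where $\Delta\in L^\times$, $g\in L$, $\beta\in\mathbb{F}_q^\times$. Moreover $\beta$ is a square root of $\alpha\,\mathrm{N}_{L/\mathbb{F}_q}(\Delta)\in\mathbb{F}_q^\times$, and $\beta$ is uniquely determined by $\Delta$ and $g$ (i.e. two modules in $\mathrm{Dr}_1(\mathbf{A}_{\mathcal H},L)$ with the same $\phi_{\overline X}$ coincide).
   Context: Standing setup: $\mathbb{F}_q$ is the finite field with $q$ elements. Let $d\ge5$ be odd, $m$ a positive divisor of $d$, $p\in\mathbb{F}_q[X]$ monic irreducible of degree $d/m$, $f=\alpha p^m$ with $\alpha\in\mathbb{F}_q^\times$, and $h\in\mathbb{F}_q[X]$ nonzero of degree $\le(d-1)/2$ and not divisible by $p$. Let $\xi=Y^2+h(X)Y-f(X)$ and assume the affine plane curve $\mathcal H:\xi=0$ is nonsingular. Let $\mathbf{A}_{\mathcal H}=\mathbb{F}_q[X][Y]/(\xi)$, $\mathfrak{p}=\langle p(\overline X),\overline Y\rangle$, $L$ a degree-$m$ extension of $\mathbf{A}_{\mathcal H}/\mathfrak{p}\simeq\mathbb{F}_q[X]/(p)$ (so $[L:\mathbb{F}_q]=d$), $\gamma:\mathbf{A}_{\mathcal H}\to\mathbf{A}_{\mathcal H}/\mathfrak{p}\hookrightarrow L$. $L\{\tau\}$ is the Ore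 polynomial ring with $\tau a=a^q\tau$; $\tau_L=\tau^d$. A Drinfeld $\mathbf{A}_{\mathcal H}$-module over $L$ is an $\mathbb{F}_q$-algebra morphism $\phi:\mathbf{A}_{\mathcal H}\to L\{\tau\}$ with constant coefficient of $\phi_a$ equal to $\gamma(a)$ and some $\phi_a$ nonconstant; it has rank $1$ if $\deg_\tau\phi_a=\deg(a)=\log_q\#(\mathbf{A}_{\mathcal H}/a\mathbf{A}_{\mathcal H})$ for all $a\neq0$; $\mathrm{Dr}_1(\mathbf{A}_{\mathcal H},L)$ is the set of these. $\mathrm{N}_{L/\mathbb{F}_q}$ is the field norm. *)

From HB Require Import structures.
From mathcomp Require Import all_boot all_order all_algebra all_field.
Set Implicit Arguments. Unset Strict Implicit. Unset Printing Implicit Defensive.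
Import GRing.Theory.
Local Open Scope ring_scope.

(* Conventions.
   - A polynomial r : {poly {poly F}} is a polynomial in Y (outer variable 'X)
     with coefficients in F[X] (inner variable); so  Xbar = ('X)%:P  and
     Ybar = 'X.  The ring A_H = F[X][Y]/(xi) is handled through its
     representatives in F[X][Y]; morphisms out of A_H are morphisms out of
     F[X][Y] vanishing on the ideal (xi).
   - An Ore polynomial  sum_i a_i tau^i  in L{tau} is stored as the
     coefficient list  sum_i a_i 'X^i : {poly L}; its tau-degree is
     (size P).-1. *)

(* Ore multiplication in L{tau}, tau a = a^q tau. *)
Definition oremul (q : nat) (L : comNzRingType) (P Q : {poly L}) : {poly L} :=
  \sum_(i < size P) (P`_i *: 'X^i) * map_poly (fun b => b ^+ (q ^ i)) Q.

Definition ev2 (F : fieldType) (K : fieldExtType F) (x y : K)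
  (P : {poly {poly F}}) : K :=
  (map_poly (fun c : {poly F} => (map_poly (in_alg K) c).[x]) P).[y].

Definition dY (F : fieldType) (P : {poly {poly F}}) := P^`().
Definition dX (F : fieldType) (P : {poly {poly F}}) := map_poly (@deriv F) P.

(* the curve xi = 0 is nonsingular: no point over any (finite) field
   extension of F (hence over the algebraic closure) where xi and both
   partial derivatives vanish *)
Definition nonsingular (F : fieldType) (xi : {poly {poly F}}) : Prop :=
  forall (K : fieldExtType F) (x y : K),
    ~ [/\ ev2 x y xi = 0, ev2 x y (dX xi) = 0 & ev2 x y (dY xi) = 0].

Definition in_ideal1 (F : fieldType) (xi a : {poly {poly F}}) : Prop :=
  exists u, a = xi * u.

Definition in_ideal2 (F : fieldType) (xi a r : {poly {poly F}}) : Prop :=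
  exists u v, r = xi * u + a * v.

(* #(A_H / a A_H) = N : S is a complete, irredundant list of
   representatives of F[X][Y]/(xi, a) = A_H/aA_H, of size N. *)
Definition quot_card (F : fieldType) (xi a : {poly {poly F}}) (N : nat) : Prop :=
  exists S : seq {poly {poly F}},
    [/\ (forall r, exists2 s, s \in S & in_ideal2 xi a (r - s)),
        (forall s t, s \in S -> t \in S -> in_ideal2 xi a (s - t) -> s = t),
        uniq S & size S = N].

(* gamma : A_H -> A_H/p = F[X]/(p) -> L, the embedding F[X]/(p) -> L being
   given by a root theta of p in L :  gamma(P(X,Y)) = P(theta, 0). *)
Definition gammaL (F : fieldType) (L : fieldExtType F) (theta : L)
  (a : {poly {poly F}}) : L :=
  (map_poly (in_alg L) a.[0]).[theta].

(* Drinfeld A_H-module over L (phi given on representatives in F[X][Y]):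
   F_q-algebra morphism A_H -> L{tau} with constant term gamma and some
   phi_a nonconstant. *)
Definition drinfeld (F : finFieldType) (L : fieldExtType F)
  (xi : {poly {poly F}}) (theta : L) (phi : {poly {poly F}} -> {poly L}) : Prop :=
  [/\ (forall a b, phi (a + b) = phi a + phi b),
      (forall a b, phi (a * b) = oremul #|F| (phi a) (phi b)),
      (forall c : F, phi (c%:P%:P) = (in_alg L c)%:P),
      (forall a, in_ideal1 xi a -> phi a = 0)
    & (forall a, (phi a)`_0 = gammaL theta a)]
  /\ (exists a, (1 < size (phi a))%N).

(* rank 1: deg_tau phi_a = deg a = log_q #(A_H/aA_H) for every a <> 0 in A_H *)
Definition rank1 (F : finFieldType) (L : fieldExtType F)
  (xi : {poly {poly F}}) (phi : {poly {poly F}} -> {poly L}) : Prop :=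
  forall a, ~ in_ideal1 xi a -> quot_card xi a (#|F| ^ (size (phi a)).-1).

Definition Dr1 (F : finFieldType) (L : fieldExtType F)
  (xi : {poly {poly F}}) (theta : L) (phi : {poly {poly F}} -> {poly L}) : Prop :=
  drinfeld xi theta phi /\ rank1 xi phi.

From HB Require Import structures.
From mathcomp Require Import all_boot all_order all_algebra all_field.
From mathcomp Require Import fingroup cyclic.
From mathcomp Require Import zify ring.
Set Implicit Arguments. Unset Strict Implicit.
Import GRing.Theory.
Local Open Scope ring_scope.

(* The tau-degree of phi_X is 2, because A/XA = F_q[Y]/(Y^2 + h(0)Y - f(0))
   has q^2 elements; so phi_X = Delta tau^2 + g tau + theta, and for c in
   F_q[X] the Ore polynomial phi_c has degree 2 deg c and leading coefficient
   lc(c) Delta^(1 + q^2 + ... + q^(2 deg c - 2)).  As phi_p commutes with phi_X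
   and has no constant term, its lowest nonzero coefficient sits in a degree j
   with theta^(q^j) = theta, whence j >= deg p; so phi_f, f = alpha p^m, has
   no terms below tau^d and has degree 2d.  The curve equation gives
   phi_Y phi_(Y+h) = phi_f, where phi_(Y+h) has the nonzero constant term
   gamma(h) and phi_h has degree < d: this forces phi_Y = b tau^d.  Commuting
   with phi_X gives b^(q^2) = b, so b lies in F_q since d is odd, and the
   leading coefficients give b^2 = alpha Delta^(sum_(i<d) q^(2i)), which is
   alpha N(Delta) because i |-> 2i permutes Z/dZ.  Finally b is the tau^d
   coefficient of phi_f divided by gamma(Y+h)^(q^d), hence is determined by
   phi_X. *)

Definition vanishes_below (R : nzRingType) (P : {poly R}) (n : nat) :=
  forall i, (i < n)%N -> P`_i = 0.

Lemma vanishes_below_first_nonzero (R : nzRingType) (P : {poly R}) :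
  P != 0 -> exists2 j, P`_j != 0 & vanishes_below P j.
Proof.
move=> nzP; have ex : exists i, P`_i != 0.
  by exists (size P).-1; rewrite -/(lead_coef P) lead_coef_eq0.
case: (ex_minnP ex) => j Pj min_j; exists j => // i lt_ij.
by apply/eqP; apply: contraTT lt_ij => /min_j; rewrite -leqNgt.
Qed.

Lemma vanishes_below_size (R : nzRingType) (P : {poly R}) n :
  vanishes_below P n -> P != 0 -> (n < size P)%N.
Proof.
move=> P_n nz_P; have P_gt0 : (0 < size P)%N by rewrite size_poly_gt0.
rewrite ltnNge; apply: contra nz_P => le_Pn.
by rewrite -lead_coef_eq0 /lead_coef P_n // (leq_trans _ le_Pn) ?ltn_predL.
Qed.

Section OreMultiplication.
Variables (q : nat) (R : idomainType).
Hypothesis q_gt0 : (0 < q)%N.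
Local Notation "P *o Q" := (oremul q P Q) (at level 40).

Let expq0 i : (0 : R) ^+ (q ^ i) = 0.
Proof. by rewrite expr0n expn_eq0 eqn0Ngt q_gt0. Qed.

Lemma coef_oremul (P Q : {poly R}) n :
  (P *o Q)`_n = \sum_(i < size P)
      (if (i <= n)%N then P`_i * Q`_(n - i) ^+ (q ^ i) else 0).
Proof.
rewrite /oremul coef_sum; apply: eq_bigr => i _.
rewrite -scalerAl coefZ coefXnM; case: ltnP => _; first by rewrite mulr0.
by rewrite coef_map_id0 // expq0.
Qed.

Lemma oremul0p (Q : {poly R}) : 0 *o Q = 0.
Proof. by rewrite /oremul size_poly0 big_ord0. Qed.

Section Valuation.
Variables (P Q : {poly R}) (a b : nat).
Hypotheses (P_a : vanishes_below P a) (Q_b : vanishes_below Q b).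

Lemma oremul_vanishes_below : vanishes_below (P *o Q) (a + b).
Proof.
move=> n lt_n; rewrite coef_oremul big1 // => i _; case: ifP => // le_in.
have [lt_ia|le_ai] := ltnP i a; first by rewrite P_a // mul0r.
by rewrite Q_b ?expq0 ?mulr0 //; lia.
Qed.

Lemma coef_oremul_valuation : (P *o Q)`_(a + b) = P`_a * Q`_b ^+ (q ^ a).
Proof.
rewrite coef_oremul; have [lt_a|le_a] := ltnP a (size P); last first.
  rewrite nth_default // mul0r big1 // => i _; case: ifP => // _.
  by rewrite P_a ?mul0r //; apply: leq_trans (ltn_ord i) le_a.
rewrite (bigD1 (Ordinal lt_a)) //= leq_addr addKn big1 ?addr0 // => i ne_ia.
case: ifP => // le_i; have [lt_ia|le_ai] := ltnP i a; first by rewrite P_a ?mul0r.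
have {}ne_ia : nat_of_ord i != a by apply: contra ne_ia => /eqP ia; apply/eqP/val_inj.
by rewrite Q_b ?expq0 ?mulr0 //; lia.
Qed.

End Valuation.

Lemma coef_oremul_valuationl (P Q : {poly R}) a :
  vanishes_below P a -> (P *o Q)`_a = P`_a * Q`_0 ^+ (q ^ a).
Proof. by move=> P_a; rewrite -[in LHS](addn0 a) coef_oremul_valuation. Qed.

Lemma coef_oremul_valuationr (P Q : {poly R}) b :
  vanishes_below Q b -> (P *o Q)`_b = P`_0 * Q`_b.
Proof. by move=> Q_b; rewrite -[in LHS](add0n b) coef_oremul_valuation // expr1. Qed.

Lemma oremul_eq0_high (P Q : {poly R}) n :
  (size P + size Q <= n.+1)%N -> (P *o Q)`_n = 0.
Proof.
move=> le_n; rewrite coef_oremul big1 // => -[i /= lt_i] _; case: ifP => // le_in.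
rewrite [Q`__]nth_default ?expq0 ?mulr0 // leq_subRL // -ltnS -addSn.
by apply: leq_trans le_n; rewrite leq_add2r.
Qed.

Lemma coef_oremul_top (P Q : {poly R}) : P != 0 -> Q != 0 ->
  (P *o Q)`_((size P).-1 + (size Q).-1) =
  lead_coef P * lead_coef Q ^+ (q ^ (size P).-1).
Proof.
move=> nzP nzQ; rewrite coef_oremul.
have sP : (0 < size P)%N by rewrite size_poly_gt0.
have sQ : (0 < size Q)%N by rewrite size_poly_gt0.
have lt_P : ((size P).-1 < size P)%N by rewrite prednK.
rewrite (bigD1 (Ordinal lt_P)) //= leq_addr addKn big1 ?addr0 // => i ne_i.
case: ifP => // le_i.
have {}ne_i : nat_of_ord i != (size P).-1.
  by apply: contra ne_i => /eqP ie; apply/eqP/val_inj.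
rewrite [Q`__]nth_default ?expq0 ?mulr0 //.
by move: (ltn_ord i) le_i ne_i sP sQ; set sP := size P; set sQ := size Q; lia.
Qed.

Lemma size_oremul (P Q : {poly R}) : P != 0 -> Q != 0 ->
  size (P *o Q) = (size P + size Q).-1.
Proof.
move=> nzP nzQ; have sP : (0 < size P)%N by rewrite size_poly_gt0.
have sQ : (0 < size Q)%N by rewrite size_poly_gt0.
apply/eqP; rewrite eqn_leq; apply/andP; split.
  by apply/leq_sizeP => j le_j; apply: oremul_eq0_high; lia.
have -> : ((size P + size Q).-1 = ((size P).-1 + (size Q).-1).+1)%N by lia.
have nz_top : (P *o Q)`_((size P).-1 + (size Q).-1) != 0.
  by rewrite coef_oremul_top // mulf_neq0 ?expf_neq0 ?lead_coef_eq0.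
by rewrite ltnNge; apply: contra nz_top => /leq_sizeP ->.
Qed.

Lemma lead_coef_oremul (P Q : {poly R}) : P != 0 -> Q != 0 ->
  lead_coef (P *o Q) = lead_coef P * lead_coef Q ^+ (q ^ (size P).-1).
Proof.
move=> nzP nzQ; rewrite -coef_oremul_top // /lead_coef size_oremul //.
have sP : (0 < size P)%N by rewrite size_poly_gt0.
have sQ : (0 < size Q)%N by rewrite size_poly_gt0.
by congr (_`_ _); lia.
Qed.

End OreMultiplication.

Section Frobenius.
Variables (F : finFieldType) (L : fieldExtType F).
Local Notation q := #|F|.
Let q_gt0 : (0 < q)%N := ltnW (finNzRing_gt1 F).

Lemma pchar_nat_card_pow j : [pchar L].-nat (q ^ j)%N.
Proof.
have [p p_pr pcharFp] := finPcharP F.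
rewrite (card_pprimeChar pcharFp) -expnM pnatX.
by rewrite (pnatE _ p_pr) pchar_lalg pcharFp.
Qed.

Lemma frobeniusD j (x y : L) : (x + y) ^+ (q ^ j) = x ^+ (q ^ j) + y ^+ (q ^ j).
Proof. exact/exprDn_pchar/pchar_nat_card_pow. Qed.

Lemma frobenius_in_alg j (c : F) : (in_alg L c) ^+ (q ^ j) = in_alg L c.
Proof.
elim: j => [|j IHj]; first by rewrite expr1.
by rewrite expnS mulnC exprM IHj -rmorphXn /= expf_card.
Qed.

Lemma frobenius_horner j (w : {poly F}) (x : L) :
  (map_poly (in_alg L) w).[x] ^+ (q ^ j) = (map_poly (in_alg L) w).[x ^+ (q ^ j)].
Proof.
elim/poly_ind: w => [|w c IHw].
  by rewrite rmorph0 !horner0 expr0n expn_eq0 eqn0Ngt q_gt0.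
rewrite rmorphD rmorphM /= map_polyX map_polyC !hornerE /=.
by rewrite frobeniusD exprMn IHw frobenius_in_alg.
Qed.

Lemma frobenius_fixed_in_alg (x : L) : x ^+ q = x -> exists c, x = in_alg L c.
Proof.
move=> fix_x; have : x \in (1%VS : {vspace L}).
  by rewrite Fermat's_little_theorem dimv1 expn1 fix_x.
by case/vlineP => c ->; exists c.
Qed.

Lemma frobenius_dim (x : L) : x ^+ (q ^ \dim {:L}) = x.
Proof. by apply/eqP; rewrite -Fermat's_little_theorem memvf. Qed.

Lemma frobenius_fixed_odd_dim (x : L) :
  odd (\dim {:L}) -> x ^+ (q ^ 2) = x -> x ^+ q = x.
Proof.
move=> odd_n fix_x; have fix_even t : x ^+ (q ^ (2 * t)) = x.
  by elim: t => [|t IHt]; rewrite ?muln0 ?expr1 // mulnS expnD exprM fix_x IHt.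
have dbl_half : (2 * (\dim {:L})./2.+1 = (\dim {:L}).+1)%N.
  by have := odd_double_half (\dim {:L}); rewrite odd_n; lia.
by rewrite -{2}(fix_even (\dim {:L})./2.+1) dbl_half expnSr exprM frobenius_dim.
Qed.

End Frobenius.

Section IrreducibleRoot.
Variables (F : finFieldType) (L : fieldExtType F) (p : {poly F}) (theta : L).
Hypotheses (irr_p : irreducible_poly p)
           (root_p : (map_poly (in_alg L) p).[theta] = 0).
Local Notation q := #|F|.

Lemma root_map_dvdp (w : {poly F}) :
  root (map_poly (in_alg L) w) theta = (p %| w).
Proof.
apply/idP/idP => [w_theta|/dvdpP [r ->]]; last first.
  by rewrite /root rmorphM hornerM /= root_p mulr0.
apply: contraTT w_theta => ndvd; apply: (coprimep_root (p := map_poly (in_alg L) p)).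
  rewrite coprimep_map coprimep_def.
  have [gcd1|gcdp] := irredp_XsubCP irr_p (dvdp_gcdl p w).
    by rewrite (eqp_size gcd1) size_poly1.
  by case/negP: ndvd; rewrite -(eqp_dvdl _ gcdp) dvdp_gcdr.
exact/rootP.
Qed.

(* [F(theta)] has [q ^ deg p] elements, all roots of ['X^(q^j) - 'X]. *)
Lemma frobenius_fixed_root_degree j :
  (0 < j)%N -> theta ^+ (q ^ j) = theta -> ((size p).-1 <= j)%N.
Proof.
move=> j_gt0 fix_theta; set k := (size p).-1.
pose ev (t : k.-tuple F) := (map_poly (in_alg L) (\poly_(i < k) t`_i)).[theta].
have ev_inj : injective ev.
  move=> t u eq_tu; set w := \poly_(i < k) t`_i - \poly_(i < k) u`_i.
  have p_w : p %| w.
    by rewrite -root_map_dvdp /root rmorphB hornerD hornerN -/(ev t) -/(ev u) eq_tu subrr.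
  have size_w : (size w <= k)%N.
    by rewrite (leq_trans (size_polyD _ _)) // geq_max size_opp !size_poly.
  have w0 : w = 0.
    apply: contraTeq p_w => nz_w; apply/negP => /(dvdp_leq nz_w).
    have sp : (0 < size p)%N by rewrite size_poly_gt0 irredp_neq0.
    by move: size_w sp; rewrite /k; set sw := size w; set sp := size p; lia.
  apply: eq_from_tnth => i; rewrite !(tnth_nth 0).
  have /polyP/(_ i) := w0; rewrite coef0 coefB !coef_poly ltn_ord.
  by move/eqP; rewrite subr_eq0 => /eqP.
pose P : {poly L} := 'X^(q ^ j) - 'X.
have q_gt1 := finNzRing_gt1 F.
have size_P : size P = (q ^ j).+1.
  have qj_gt1 : (1 < q ^ j)%N by rewrite -[1%N](expn0 q) ltn_exp2l.
  by rewrite /P size_addl ?size_polyXn // size_opp size_polyX ltnS.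
have nz_P : P != 0 by rewrite -size_poly_gt0 size_P.
have roots_P : all (root P) (map ev (enum {: k.-tuple F})).
  apply/allP => _ /mapP [t _ ->]; rewrite /root /P !hornerE.
  by rewrite /ev frobenius_horner fix_theta subrr.
have uniq_ev : uniq (map ev (enum {: k.-tuple F})) by rewrite map_inj_uniq ?enum_uniq.
have := max_poly_roots nz_P roots_P uniq_ev.
by rewrite size_P size_map -cardE card_tuple ltnS leq_exp2l.
Qed.
End IrreducibleRoot.

Section FiniteFieldNorm.
Variables (F : finFieldType) (L : splittingFieldType F).
Local Notation q := #|F|.
Local Notation n := (\dim {:L}).

Lemma galNorm_finField (x : L) : galNorm 1 {:L} x = \prod_(i < n) x ^+ (q ^ i).
Proof.
have [sigma gen_sigma Dsigma] := finField_galois_generator (sub1v {:L}).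
have ord_sigma : #[sigma]%g = n.
  rewrite orderE -(eqP gen_sigma) -galois_dim ?finField_galois ?sub1v //.
  by rewrite dimv1 divn1.
have sigmaX i : (sigma ^+ i)%g x = x ^+ (q ^ i).
  elim: i => [|i IHi]; first by rewrite expg0 gal_id expr1.
  by rewrite expgSr galM ?memvf // IHi Dsigma ?memvf // dimv1 expn1 expnSr exprM.
have cycle_sigma : <[sigma]>%g = [set (sigma ^+ (nat_of_ord i))%g | i : 'I_n].
  apply/setP => tau; apply/idP/imsetP => [|[i _ ->]]; last exact: mem_cycle.
  by case/cyclePmin => i; rewrite ord_sigma => lt_i ->; exists (Ordinal lt_i).
rewrite /galNorm (eqP gen_sigma) cycle_sigma big_imset /=.
  by apply: eq_bigr => i _; rewrite sigmaX.
move=> i j _ _ /eqP; rewrite eq_expg_mod_order ord_sigma !modn_small //.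
by move/eqP/val_inj.
Qed.

Lemma frobenius_modn_dim (x : L) k : x ^+ (q ^ k) = x ^+ (q ^ (k %% n)).
Proof.
have frobenius_muln t : x ^+ (q ^ (t * n)) = x.
  elim: t => [|t IHt]; first by rewrite mul0n expr1.
  by rewrite mulSn expnD exprM frobenius_dim IHt.
by rewrite {1}(divn_eq k n) expnD exprM frobenius_muln.
Qed.

(* For odd [n], doubling permutes the exponents modulo [n]. *)
Lemma galNorm_finField_odd (x : L) : odd n ->
  galNorm 1 {:L} x = \prod_(i < n) x ^+ (q ^ (2 * i)).
Proof.
move=> odd_n; have n_gt0 : (0 < n)%N by case: (n) odd_n.
pose dbl (i : 'I_n) : 'I_n := Ordinal (ltn_pmod (2 * i) n_gt0).
have dbl_inj : injective dbl.
  move=> i j /(congr1 val) /= /eqP eq_ij; apply/val_inj => /=.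
  wlog le_ji : i j eq_ij / (j <= i)%N.
    move=> IH; case: (leqP j i) => [|/ltnW] le; first exact: IH.
    by rewrite (IH j i) // eq_sym.
  have : (n %| 2 * i - 2 * j)%N by rewrite -eqn_mod_dvd // leq_mul2l le_ji orbT.
  rewrite -mulnBr Gauss_dvdr ?coprimen2 ?odd_n // => n_dvd.
  have lt_ij : (i - j < n)%N by apply: leq_ltn_trans (leq_subr _ _) (ltn_ord i).
  move: n_dvd; rewrite /dvdn modn_small // subn_eq0 => le_ij.
  by apply/eqP; rewrite eqn_leq le_ij le_ji.
rewrite galNorm_finField (reindex_inj dbl_inj); apply: eq_bigr => i _ /=.
by rewrite [in RHS]frobenius_modn_dim.
Qed.
End FiniteFieldNorm.

Section QuotientByX.
Variables (F : finFieldType) (a b : {poly F}).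
Let xi : {poly {poly F}} := 'X^2 + a%:P * 'X + b%:P.
Local Notation ev0 := (map_poly (horner_eval (0 : F))).
Let xi0 : {poly F} := 'X^2 + a.[0]%:P * 'X + b.[0]%:P.
Let red (r : {poly {poly F}}) : {poly F} := ev0 r %% xi0.

Let ev0_xi : ev0 xi = xi0.
Proof. by rewrite /xi !rmorphD rmorphM rmorphXn /= !map_polyC !map_polyX /= !horner_evalE. Qed.

Let ev0_X : ev0 'X%:P = 0.
Proof. by rewrite map_polyC /= horner_evalE hornerX. Qed.

Let ev0_lift (w : {poly F}) : ev0 (map_poly polyC w) = w.
Proof. by apply/polyP => i; rewrite !coef_map /= horner_evalE hornerC. Qed.

Let size_quadratic (R : nzRingType) (u v : R) : size ('X^2 + u%:P * 'X + v%:P) = 3%N.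
Proof.
rewrite -addrA size_addl ?size_polyXn // size_MXaddC.
by case: ifP => // _; rewrite ltnS size_polyC; case: (_ != 0).
Qed.

Lemma poly_decomp_X (r : {poly {poly F}}) :
  exists v, r = map_poly polyC (ev0 r) + 'X%:P * v.
Proof.
exists (\poly_(i < size r) (r`_i %/ 'X)); apply/polyP => i.
rewrite coefD coefCM !coef_map /= horner_evalE coef_poly.
case: (ltnP i (size r)) => lt_i; last by rewrite nth_default // horner0 mulr0 addr0.
have := modp_XsubC r`_i 0; rewrite polyC0 subr0 => mod_ri.
by rewrite {1}(divp_eq r`_i 'X) mod_ri addrC mulrC.
Qed.

Lemma in_ideal2_X (r : {poly {poly F}}) : in_ideal2 xi 'X%:P r <-> red r = 0.
Proof.
split=> [[u [v ->]]|red_r].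
  by rewrite /red rmorphD !rmorphM /= ev0_xi ev0_X mul0r addr0 mulrC modp_mull.
have [v def_r] := poly_decomp_X r; have [w def_xi] := poly_decomp_X xi.
rewrite ev0_xi in def_xi; set D := ev0 r %/ xi0.
have ev0_r : ev0 r = D * xi0 by rewrite {1}(divp_eq (ev0 r) xi0) -/(red r) red_r addr0.
have lift_xi0 : map_poly polyC xi0 = xi - 'X%:P * w by rewrite [in RHS]def_xi addrK.
exists (map_poly polyC D), (v - map_poly polyC D * w).
by rewrite {1}def_r ev0_r rmorphM /= lift_xi0; ring.
Qed.

Lemma not_in_ideal1_X : ~ in_ideal1 xi 'X%:P.
Proof.
case=> u def_X; have size_xi : size xi = 3%N by exact: size_quadratic.
have [u0|nz_u] := eqVneq u 0.
  by move/eqP: def_X; rewrite u0 mulr0 polyC_eq0 polyX_eq0.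
have := congr1 (fun r : {poly {poly F}} => size r) def_X.
rewrite size_polyC polyX_eq0 size_mul //; last first.
  by rewrite -size_poly_eq0 size_xi.
have : (0 < size u)%N by rewrite size_poly_gt0.
by rewrite size_xi; lia.
Qed.

Lemma quot_card_X N : quot_card xi 'X%:P N -> N = (#|F| ^ 2)%N.
Proof.
case=> S [S_cover S_irr S_uniq <-].
have redB r s : red (r - s) = red r - red s by rewrite /red rmorphB modpD modpN.
have size_red r : (size (red r) <= 2)%N.
  by rewrite -ltnS -(size_quadratic a.[0] b.[0]) ltn_modp -size_poly_eq0 size_quadratic.
have red_hi r i : (red r)`_i.+2 = 0 by rewrite nth_default //; exact: leq_trans (size_red r) _.
pose red2 r : F * F := ((red r)`_0, (red r)`_1).
have red2_inj : {in S &, injective red2}.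
  move=> s t Ss St [eq0 eq1]; apply: S_irr => //; apply/in_ideal2_X.
  apply/polyP => -[|[|i]]; rewrite coef0 ?redB ?coefB ?eq0 ?eq1 ?subrr //.
  by rewrite !red_hi subrr.
have red2_onto (c : F * F) : c \in map red2 S.
  pose w : {poly F} := c.1%:P + c.2 *: 'X.
  have size_w : (size w < size xi0)%N.
    rewrite size_quadratic (leq_ltn_trans (size_polyD _ _)) // gtn_max.
    rewrite (leq_ltn_trans (size_polyC_leq1 _)) //.
    by rewrite (leq_ltn_trans (size_scale_leq _ _)) ?size_polyX.
  have [s Ss red_s] := S_cover (map_poly polyC w); apply/mapP; exists s => //.
  move/in_ideal2_X: red_s; rewrite redB => /eqP; rewrite subr_eq0 => /eqP red_ws.
  rewrite /red2 -red_ws /red ev0_lift modp_small // !coefD !coefC !coefZ !coefX /=.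
  by rewrite mulr0 mulr1 addr0 add0r -surjective_pairing.
have uniq_red2 : uniq (map red2 S) by rewrite map_inj_in_uniq.
rewrite -(size_map red2) -(card_uniqP uniq_red2) -mulnn -card_prod.
by apply: eq_card => c; rewrite red2_onto inE.
Qed.

End QuotientByX.

Lemma rank1_size_phiX (F : finFieldType) (L : fieldExtType F) (a b : {poly F})
    (phi : {poly {poly F}} -> {poly L}) :
  rank1 ('X^2 + a%:P * 'X + b%:P) phi -> size (phi 'X%:P) = 3%N.
Proof.
move=> rk; have /quot_card_X/expnI := rk _ (@not_in_ideal1_X _ a b).
by move/(_ (finNzRing_gt1 F)); case: (size _) => [|[|[|[|n]]]].
Qed.

Section Gamma.
Variables (F : fieldType) (L : fieldExtType F) (theta : L).

Lemma gammaLD a b : gammaL theta (a + b) = gammaL theta a + gammaL theta b.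
Proof. by rewrite /gammaL hornerD rmorphD hornerD. Qed.

Lemma gammaL_X : gammaL theta 'X = 0.
Proof. by rewrite /gammaL hornerX rmorph0 horner0. Qed.

Lemma gammaL_C c : gammaL theta c%:P = (map_poly (in_alg L) c).[theta].
Proof. by rewrite /gammaL hornerC. Qed.

Lemma gammaL_XC : gammaL theta 'X%:P = theta.
Proof. by rewrite gammaL_C map_polyX hornerX. Qed.

End Gamma.

Section DrinfeldMorphism.
Variables (F : finFieldType) (L : fieldExtType F) (xi : {poly {poly F}}) (theta : L).
Variable phi : {poly {poly F}} -> {poly L}.
Hypothesis phi_drinfeld : drinfeld xi theta phi.
Local Notation "P *o Q" := (oremul #|F| P Q) (at level 40).

Lemma phiD a b : phi (a + b) = phi a + phi b.
Proof. by case: phi_drinfeld => -[]. Qed.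

Lemma phiM a b : phi (a * b) = phi a *o phi b.
Proof. by case: phi_drinfeld => -[]. Qed.

Lemma phiCC c : phi c%:P%:P = (in_alg L c)%:P.
Proof. by case: phi_drinfeld => -[]. Qed.

Lemma phi_ideal a : in_ideal1 xi a -> phi a = 0.
Proof. by case: phi_drinfeld => -[_ _ _ phi_xi _] _; apply: phi_xi. Qed.

Lemma coef0_phi a : (phi a)`_0 = gammaL theta a.
Proof. by case: phi_drinfeld => -[]. Qed.

Lemma phi0 : phi 0 = 0.
Proof. by apply: (addIr (phi 0)); rewrite -phiD !add0r. Qed.

Lemma phiB a b : phi (a - b) = phi a - phi b.
Proof. by apply/eqP; rewrite eq_sym subr_eq -phiD subrK. Qed.

Lemma phi_comm a b : phi a *o phi b = phi b *o phi a.
Proof. by rewrite -!phiM mulrC. Qed.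

End DrinfeldMorphism.

Section DrinfeldUniqueness.
Variables (F : finFieldType) (L : fieldExtType F) (xi : {poly {poly F}}) (theta : L).
Variables phi1 phi2 : {poly {poly F}} -> {poly L}.
Hypotheses (phi1_drinfeld : drinfeld xi theta phi1)
           (phi2_drinfeld : drinfeld xi theta phi2).
Hypothesis eq_phiX : phi1 'X%:P = phi2 'X%:P.

Lemma drinfeld_eqC c : phi1 c%:P = phi2 c%:P.
Proof.
elim/poly_ind: c => [|c e IHc]; first by rewrite !(phi0 phi1_drinfeld, phi0 phi2_drinfeld).
rewrite polyCD polyCM (phiD phi1_drinfeld) (phiD phi2_drinfeld).
rewrite (phiM phi1_drinfeld) (phiM phi2_drinfeld).
by rewrite (phiCC phi1_drinfeld) (phiCC phi2_drinfeld) IHc eq_phiX.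
Qed.

Lemma drinfeld_eq : phi1 'X = phi2 'X -> phi1 =1 phi2.
Proof.
move=> eq_phiY; elim/poly_ind => [|a c IHa].
  by rewrite (phi0 phi1_drinfeld) (phi0 phi2_drinfeld).
by rewrite (phiD phi1_drinfeld) (phiD phi2_drinfeld) (phiM phi1_drinfeld)
  (phiM phi2_drinfeld) IHa eq_phiY drinfeld_eqC.
Qed.

End DrinfeldUniqueness.

Section DegreeTwoX.
Variables (F : finFieldType) (L : fieldExtType F) (xi : {poly {poly F}}) (theta : L).
Variable phi : {poly {poly F}} -> {poly L}.
Hypotheses (phi_drinfeld : drinfeld xi theta phi) (size_phiX : size (phi 'X%:P) = 3%N).
Local Notation q := #|F|.
Local Notation "P *o Q" := (oremul q P Q) (at level 40).
Local Notation phiX := (phi 'X%:P).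
Local Notation Delta := (phi 'X%:P)`_2.
Let q_gt0 : (0 < q)%N := ltnW (finNzRing_gt1 F).

Lemma phiX_neq0 : phiX != 0.
Proof. by rewrite -size_poly_gt0 size_phiX. Qed.

Lemma lead_coef_phiX : lead_coef phiX = Delta.
Proof. by rewrite /lead_coef size_phiX. Qed.

Lemma Delta_neq0 : Delta != 0.
Proof. by rewrite -lead_coef_phiX lead_coef_eq0 phiX_neq0. Qed.

Lemma phiX_form : phiX = Delta *: 'X^2 + phiX`_1 *: 'X + (gammaL theta 'X%:P)%:P.
Proof.
apply/polyP => i; rewrite !coefD !coefZ !coefXn coefX coefC -(coef0_phi phi_drinfeld).
case: i => [|[|[|i]]] /=; rewrite ?mulr0 ?mulr1 ?add0r ?addr0 //.
by rewrite nth_default // size_phiX.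
Qed.

Lemma phiC_MXaddC c e :
  phi (c * 'X + e%:P)%:P = phi c%:P *o phiX + (in_alg L e)%:P.
Proof.
by rewrite polyCD polyCM (phiD phi_drinfeld) (phiM phi_drinfeld) (phiCC phi_drinfeld).
Qed.

Lemma size_phiC c : size (phi c%:P) = (size c).*2.-1.
Proof.
elim/poly_ind: c => [|c e IHc]; first by rewrite polyC0 (phi0 phi_drinfeld) !size_poly0.
have [-> | nz_c] := eqVneq c 0.
  rewrite phiC_MXaddC polyC0 (phi0 phi_drinfeld) oremul0p mul0r !add0r.
  by rewrite !size_polyC fmorph_eq0; case: (e != 0).
have size_c : (0 < size c)%N by rewrite size_poly_gt0.
have nz_phic : phi c%:P != 0 by rewrite -size_poly_gt0 IHc; lia.
have size_prod : size (phi c%:P *o phiX) = (size c).*2.+1.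
  by rewrite size_oremul // ?phiX_neq0 // IHc size_phiX; lia.
rewrite phiC_MXaddC size_polyDl size_prod ?size_MXaddC ?(negPf nz_c) //.
by apply: leq_ltn_trans (size_polyC_leq1 _) _; lia.
Qed.

Lemma lead_coef_phiC c : lead_coef (phi c%:P) =
  in_alg L (lead_coef c) * \prod_(i < (size c).-1) Delta ^+ (q ^ (2 * i)).
Proof.
elim/poly_ind: c => [|c e IHc].
  by rewrite polyC0 (phi0 phi_drinfeld) !lead_coef0 rmorph0 mul0r.
have [-> | nz_c] := eqVneq c 0.
  rewrite phiC_MXaddC polyC0 (phi0 phi_drinfeld) oremul0p mul0r !add0r.
  by rewrite !lead_coefC size_polyC; case: (e != 0); rewrite big_ord0 mulr1.
have size_c : (0 < size c)%N by rewrite size_poly_gt0.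
have nz_phic : phi c%:P != 0 by rewrite -size_poly_gt0 size_phiC; lia.
have size_e : (size (in_alg L e)%:P < size (phi c%:P *o phiX))%N.
  rewrite size_oremul ?phiX_neq0 // size_phiC size_phiX.
  by rewrite (leq_ltn_trans (size_polyC_leq1 _)) //; lia.
have size_ce : size (c * 'X + e%:P) = (size c).+1 by rewrite size_MXaddC (negPf nz_c).
have lead_ce : lead_coef (c * 'X + e%:P) = lead_coef c.
  rewrite lead_coefDl ?lead_coefMX // size_mulX //.
  by rewrite (leq_ltn_trans (size_polyC_leq1 _)).
rewrite phiC_MXaddC lead_coefDl // lead_coef_oremul ?phiX_neq0 // IHc.
rewrite lead_ce size_ce lead_coef_phiX size_phiC -mulrA; congr (_ * _).
by rewrite -(prednK size_c) big_ord_recr /=; congr (_ * _ ^+ (q ^ _)); lia.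
Qed.

Variable p : {poly F}.
Hypotheses (irr_p : irreducible_poly p)
           (root_p : (map_poly (in_alg L) p).[theta] = 0).

(* The lowest nonzero coefficient [a] of [phi p] sits at some degree [j > 0],
   and comparing degree-[j] coefficients of [phi p phi X = phi X phi p] gives
   [a theta^(q^j) = theta a]. *)
Lemma phi_p_vanishes_below : vanishes_below (phi p%:P) (size p).-1.
Proof.
have size_p : (0 < size p)%N by rewrite size_poly_gt0 irredp_neq0.
have nz_phip : phi p%:P != 0 by rewrite -size_poly_gt0 size_phiC; lia.
have [j nz_j below_j] := vanishes_below_first_nonzero nz_phip.
have j_gt0 : (0 < j)%N.
  by move: nz_j; case: (j) => //; rewrite (coef0_phi phi_drinfeld) gammaL_C root_p eqxx.
have le_j : ((size p).-1 <= j)%N.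
  apply: (frobenius_fixed_root_degree irr_p root_p j_gt0); apply: (mulfI nz_j).
  have := coef_oremul_valuationl q_gt0 phiX below_j.
  have := coef_oremul_valuationr q_gt0 phiX below_j.
  rewrite (coef0_phi phi_drinfeld) gammaL_XC (phi_comm phi_drinfeld).
  by move=> -> <-; rewrite mulrC.
by move=> i lt_i; apply: below_j; apply: leq_trans lt_i le_j.
Qed.

End DegreeTwoX.

Section HyperellipticCurve.
Variables (F : finFieldType) (L : splittingFieldType F) (d m : nat) (p : {poly F})
  (alpha : F) (h : {poly F}) (theta : L).
Hypotheses (odd_d : odd d) (m_dvd_d : (m %| d)%N) (p_monic : p \is monic)
  (irr_p : irreducible_poly p) (size_p : size p = (d %/ m).+1) (alpha_neq0 : alpha != 0)
  (size_h : (size h <= (d.-1)./2 + 1)%N) (p_ndvd_h : ~~ (p %| h))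
  (dimL : \dim {:L} = d) (root_p : (map_poly (in_alg L) p).[theta] = 0).
Let f := alpha *: p ^+ m.
Let xi := 'X^2 + h%:P * 'X - f%:P.
Variable phi : {poly {poly F}} -> {poly L}.
Hypotheses (phi_drinfeld : drinfeld xi theta phi) (size_phiX : size (phi 'X%:P) = 3%N).
Local Notation q := #|F|.
Local Notation "P *o Q" := (oremul q P Q) (at level 40).
Local Notation Delta := (phi 'X%:P)`_2.
Local Notation phiY := (phi 'X).
Local Notation phiYh := (phi ('X + h%:P)).
Let q_gt0 : (0 < q)%N := ltnW (finNzRing_gt1 F).
Let frobenius_d (x : L) : x ^+ (q ^ d) = x.
Proof. by rewrite -dimL frobenius_dim. Qed.

Lemma size_f : size f = d.+1.
Proof.
have nz_p : p != 0 by rewrite monic_neq0.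
have size_pm : (0 < size (p ^+ m))%N by rewrite size_poly_gt0 expf_neq0.
by rewrite size_scale // -(prednK size_pm) size_exp size_p /= divnK.
Qed.

Lemma phi_f_vanishes_below : vanishes_below (phi f%:P) d.
Proof.
have phi_pow n : vanishes_below (phi (alpha *: p ^+ n)%:P) (n * (size p).-1).
  elim: n => [|n IHn] //.
  rewrite exprSr scalerAl polyCM (phiM phi_drinfeld) mulSnr.
  apply: (oremul_vanishes_below q_gt0 IHn); exact: (phi_p_vanishes_below phi_drinfeld).
have d_eq : d = (m * (size p).-1)%N by rewrite size_p mulnC divnK.
by rewrite d_eq; apply: phi_pow.
Qed.

Lemma size_phi_f : size (phi f%:P) = d.*2.+1.
Proof. by rewrite (size_phiC phi_drinfeld) // size_f. Qed.

Lemma lead_coef_phi_f :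
  lead_coef (phi f%:P) = in_alg L alpha * \prod_(i < d) Delta ^+ (q ^ (2 * i)).
Proof.
rewrite (lead_coef_phiC phi_drinfeld) // size_f lead_coefZ lead_coef_exp.
by rewrite (eqP p_monic) expr1n mulr1.
Qed.

Lemma size_phi_h : (size (phi h%:P) <= d)%N.
Proof.
rewrite (size_phiC phi_drinfeld) //; move: size_h.
by have := odd_double_half d; rewrite odd_d -muln2; lia.
Qed.

Lemma phiY_mul : phiY *o phiYh = phi f%:P.
Proof.
have /(phi_ideal phi_drinfeld) : in_ideal1 xi xi by exists 1; rewrite mulr1.
have -> : xi = 'X * ('X + h%:P) - f%:P by rewrite /xi; ring.
by rewrite (phiB phi_drinfeld) (phiM phi_drinfeld) => /eqP; rewrite subr_eq0 => /eqP.
Qed.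

Lemma coef0_phiYh : phiYh`_0 != 0.
Proof.
rewrite (coef0_phi phi_drinfeld) gammaLD gammaL_X add0r gammaL_C.
by rewrite -rootE (root_map_dvdp irr_p root_p).
Qed.

Lemma phiY_neq0 : phiY != 0.
Proof.
apply/eqP => phiY0; have := size_phi_f.
by rewrite -phiY_mul phiY0 oremul0p size_poly0.
Qed.

Lemma phiY_vanishes_below : vanishes_below phiY d.
Proof.
have [j nz_j below_j] := vanishes_below_first_nonzero phiY_neq0.
have le_dj : (d <= j)%N.
  rewrite leqNgt; apply: contra nz_j => lt_jd.
  move: (phi_f_vanishes_below lt_jd).
  rewrite -phiY_mul (coef_oremul_valuationl q_gt0 _ below_j).
  by move/eqP; rewrite mulf_eq0 expf_eq0 (negPf coef0_phiYh) andbF orbF.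
by move=> i lt_id; apply: below_j; apply: leq_trans lt_id le_dj.
Qed.

Lemma size_phi_h_lt : (size (phi h%:P) < size phiY)%N.
Proof.
exact: leq_ltn_trans size_phi_h (vanishes_below_size phiY_vanishes_below phiY_neq0).
Qed.

Lemma size_phiY : size phiY = d.+1.
Proof.
have size_phiYh : size phiYh = size phiY.
  by rewrite (phiD phi_drinfeld) size_polyDl // size_phi_h_lt.
have nz_phiYh : phiYh != 0 by rewrite -size_poly_gt0 size_phiYh size_poly_gt0 phiY_neq0.
have := size_phi_f; rewrite -phiY_mul size_oremul ?phiY_neq0 // size_phiYh -addnn.
by have := vanishes_below_size phiY_vanishes_below phiY_neq0; set s := size phiY; lia.
Qed.

Lemma phiY_monomial : phiY = phiY`_d *: 'X^d.
Proof.
apply/polyP => i; rewrite coefZ coefXn; case: (ltngtP i d) => [lt_id|lt_di|->].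
- by rewrite phiY_vanishes_below // mulr0.
- by rewrite mulr0 nth_default // size_phiY.
- by rewrite mulr1.
Qed.

Lemma lead_coef_phiY : lead_coef phiY = phiY`_d.
Proof. by rewrite /lead_coef size_phiY. Qed.

Lemma lead_coef_phiYh : lead_coef phiYh = phiY`_d.
Proof. by rewrite (phiD phi_drinfeld) lead_coefDl ?size_phi_h_lt // lead_coef_phiY. Qed.

Lemma phiY_coef_frobenius2 : phiY`_d ^+ (q ^ 2) = phiY`_d.
Proof.
have nz_phiX := phiX_neq0 size_phiX.
have := congr1 lead_coef (phi_comm phi_drinfeld 'X 'X%:P).
rewrite !lead_coef_oremul ?phiY_neq0 // size_phiY size_phiX.
rewrite !(lead_coef_phiX size_phiX) lead_coef_phiY frobenius_d mulrC.
by move/(mulfI (Delta_neq0 size_phiX)).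
Qed.

Lemma phiY_coef_sqr : phiY`_d ^+ 2 = in_alg L alpha * galNorm 1 {:L} Delta.
Proof.
have nz_phiYh : phiYh != 0.
  by rewrite -lead_coef_eq0 lead_coef_phiYh -lead_coef_phiY lead_coef_eq0 phiY_neq0.
have odd_dimL : odd (\dim {:L}) by rewrite dimL.
rewrite (galNorm_finField_odd _ odd_dimL) dimL -lead_coef_phi_f -phiY_mul.
by rewrite lead_coef_oremul ?phiY_neq0 // lead_coef_phiY lead_coef_phiYh size_phiY frobenius_d.
Qed.

Lemma phiY_eq :
  phiY = ((phi f%:P)`_d / gammaL theta ('X + h%:P) ^+ (q ^ d)) *: 'X^d.
Proof.
rewrite {1}phiY_monomial; congr (_ *: _).
rewrite -phiY_mul (coef_oremul_valuationl q_gt0 _ phiY_vanishes_below).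
by rewrite -(coef0_phi phi_drinfeld) mulfK ?expf_neq0 ?coef0_phiYh.
Qed.

Lemma phiY_form : exists2 beta : F, beta != 0 &
  phiY = in_alg L beta *: 'X^d /\ in_alg L beta ^+ 2 = in_alg L alpha * galNorm 1 {:L} Delta.
Proof.
have odd_dimL : odd (\dim {:L}) by rewrite dimL.
have /frobenius_fixed_in_alg [beta def_beta] :=
  frobenius_fixed_odd_dim odd_dimL phiY_coef_frobenius2.
exists beta; last by rewrite -def_beta -phiY_coef_sqr {1}phiY_monomial.
apply: contraNneq phiY_neq0 => beta0.
by rewrite phiY_monomial def_beta beta0 rmorph0 scale0r.
Qed.

End HyperellipticCurve.

Theorem lemma5 (F : finFieldType) (d m : nat) (p : {poly F}) (alpha : F)
  (h : {poly F}) (L : splittingFieldType F) (theta : L) :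
  odd d -> (5 <= d)%N -> (0 < m)%N -> (m %| d)%N ->
  p \is monic -> irreducible_poly p -> size p = (d %/ m).+1 ->
  alpha != 0 ->
  h != 0 -> (size h <= (d.-1)./2 + 1)%N -> ~~ (p %| h) ->
  nonsingular ('X^2 + h%:P * 'X - (alpha *: p ^+ m)%:P) ->
  \dim {: L} = d ->
  (map_poly (in_alg L) p).[theta] = 0 ->
  let xi := 'X^2 + h%:P * 'X - (alpha *: p ^+ m)%:P in
  (forall phi : {poly {poly F}} -> {poly L}, Dr1 xi theta phi ->
     exists (Delta g : L) (beta : F),
       [/\ Delta != 0, beta != 0,
           phi ('X%:P) = Delta *: 'X^2 + g *: 'X + (gammaL theta ('X%:P))%:P,
           phi 'X = (in_alg L beta) *: 'X^d
         & (in_alg L beta) ^+ 2 = in_alg L alpha * galNorm 1 {: L} Delta])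
  /\
  (forall phi1 phi2 : {poly {poly F}} -> {poly L},
     Dr1 xi theta phi1 -> Dr1 xi theta phi2 ->
     phi1 ('X%:P) = phi2 ('X%:P) -> forall a, phi1 a = phi2 a).
Proof.
move=> odd_d _ _ m_dvd_d p_monic irr_p size_p alpha_neq0 _ size_h p_ndvd_h _ dimL root_p xi.
have size_phiX phi : Dr1 xi theta phi -> size (phi 'X%:P) = 3%N.
  by case=> _; rewrite /xi -polyCN; apply: rank1_size_phiX.
have form_phiY :=
  phiY_form odd_d m_dvd_d p_monic irr_p size_p alpha_neq0 size_h p_ndvd_h dimL root_p.
have eq_phiY :=
  phiY_eq odd_d m_dvd_d p_monic irr_p size_p alpha_neq0 size_h p_ndvd_h dimL root_p.
split=> [phi Dr1_phi | phi1 phi2 Dr1_phi1 Dr1_phi2 eq_phiX].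
  have [phi_drinfeld _] := Dr1_phi; have size3_phiX := size_phiX _ Dr1_phi.
  have [beta nz_beta [phiY_beta beta_sqr]] := form_phiY _ phi_drinfeld size3_phiX.
  exists (phi 'X%:P)`_2, (phi 'X%:P)`_1, beta.
  split=> //; [exact: Delta_neq0 size3_phiX | exact: phiX_form phi_drinfeld size3_phiX].
have [[phi1_drinfeld _] [phi2_drinfeld _]] := (Dr1_phi1, Dr1_phi2).
apply: (drinfeld_eq phi1_drinfeld phi2_drinfeld eq_phiX).
rewrite (eq_phiY _ phi1_drinfeld (size_phiX _ Dr1_phi1)).
rewrite (eq_phiY _ phi2_drinfeld (size_phiX _ Dr1_phi2)).
by rewrite (drinfeld_eqC phi1_drinfeld phi2_drinfeld eq_phiX).
Qed.
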